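(* Let $n\ge1$ and $\pi\in\mathfrak B_n$ with $\pi_1>0$ (resp. $\pi_1<0$). Then for every $T\in\mathrm{Orb}^*(T_\pi)$, writing $w(T)=0\sigma_1\cdots\sigma_n$, one has $\sigma_1>0$ (resp. $\sigma_1<0$).
   Context: $\mathfrak B_n$ is the set of signed permutations $\pi=\pi_1\cdots\pi_n$ (words over $\{\pm1,\dots,\pm n\}$ with $|\pi_1|,\dots,|\pi_n|$ a permutation of $[n]$), compared as integers; set $\pi_0=0$. Trees are rooted binary trees with each child designated left or right. A min–max tree is labeled bijectively by a totally ordered set so that each node's label is the minimum or maximum of its subtree's labels. A node with a child is inner; an inner node is a min-node (resp. max-node) if its label is the minimum (resp. maximum) of its subtree. An HR-tree is a min–max tree in which every inner node $s$ has a nonempty right subtree containing the maximum label of the subtree of $s$ if $s$ is a min-node, the minimum if $s$ is a max-node. The reading word is the in-order reading $w(T)=w(L)\,\ell_{\mathrm{root}}\,w(R)$. $\mathcal{BHR}_n$ is the set of HR-trees with label set $\{0,s_1,\dots,s_n\}$, $s_i\in\{i,-i\}$, such that $0$ is the first letter of $w(T)$; $T\mapsto w(T)=0\pi_1\cdots\pi_n$ is a bijection $\mathcal{BHR}_n\to\mathfrak B_n$ and $T_\pi$ is the tree with $w(T_\pi)=0\pi$. Modified HR-action: for $i\in[n]$ and $T_\pi\in\mathcal{BHR}_n$, let $v$ be the node labeled $\pi_i$. If $v$ is a leaf, or if the node labeled $0$ is a leaf whose parent is $v$, then $\widehat\psi_i(T_\pi)=T_\pi$. Otherwise, let $R$ consist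 of $\pi_i$ and the labels of the right subtree of $v$; relabel $v$ and its right subtree, keeping the shape, so that $v$ receives $\max R$ if $v$ is a min-node and $\min R$ if $v$ is a max-node, the right subtree nodes receiving the remaining elements of $R$ by the order-preserving bijection from their old labels; all other labels are unchanged. The $\widehat\psi_i$ are commuting involutions on $\mathcal{BHR}_n$, and $\mathrm{Orb}^*(T)$ is the set of trees obtained from $T$ by compositions of the $\widehat\psi_i$, $i\in[n]$. *)

From HB Require Import structures.
From mathcomp Require Import all_boot all_order all_algebra.
Set Implicit Arguments. Unset Strict Implicit. Unset Printing Implicit Defensive.
Import Order.TTheory GRing.Theory Num.Theory.
Local Open Scope ring_scope.

(* Rooted binary trees with integer labels; [Leaf] is the EMPTY tree,
   a "leaf node" of the paper is [Node Leaf x Leaf]. *)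
Inductive tree := Leaf | Node of tree & int & tree.

Fixpoint word (t : tree) : seq int :=
  match t with Leaf => [::] | Node l x r => word l ++ x :: word r end.

Fixpoint subtrees (t : tree) : seq tree :=
  match t with Leaf => [::] | Node l x r => t :: subtrees l ++ subtrees r end.

Definition is_empty (t : tree) : bool := if t is Leaf then true else false.

Definition smin (s : seq int) : int := foldr Num.min (head 0 s) s.
Definition smax (s : seq int) : int := foldr Num.max (head 0 s) s.

Definition node_ok (t : tree) : bool :=
  match t with
  | Leaf => true
  | Node l x r =>
      let L := word t in
      ((x == smin L) || (x == smax L)) &&
      ((~~ is_empty l || ~~ is_empty r) ==>
        (~~ is_empty r &&
         (if x == smin L then smax L \in word r else smin L \in word r)))
  end.

Definition hr_tree (t : tree) : bool :=
  uniq (word t) && all node_ok (subtrees t).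

(* BHR_n: labels {0, s_1, ..., s_n} with s_i = +-i, and 0 first in w(T) *)
Definition BHR (n : nat) (t : tree) : bool :=
  [&& hr_tree t, perm_eq [seq absz x | x <- word t] (iota 0 n.+1)
    & head 1 (word t) == 0].

Definition signed_perm (n : nat) (pi : seq int) : bool :=
  perm_eq [seq absz x | x <- pi] (iota 1 n).

Fixpoint map_tree (f : int -> int) (t : tree) : tree :=
  match t with Leaf => Leaf | Node l x r => Node (map_tree f l) (f x) (map_tree f r) end.

Definition is_zero_leaf (t : tree) : bool :=
  match t with Node Leaf z Leaf => z == 0 | _ => false end.

Definition psi_node (l : tree) (x : int) (r : tree) : tree :=
  if is_empty l && is_empty r then Node l x r
  else if is_zero_leaf l || is_zero_leaf r then Node l x r
  else
    let R := x :: word r in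
    let ismin := x == smin (word (Node l x r)) in
    let newv := if ismin then smax R else smin R in
    let oldsorted := sort <=%R (word r) in
    let newsorted := sort <=%R (rem newv R) in
    let f := fun y => nth 0 newsorted (index y oldsorted) in
    Node l newv (map_tree f r).

Fixpoint psi_at (a : int) (t : tree) : tree :=
  match t with
  | Leaf => Leaf
  | Node l x r => if x == a then psi_node l x r else Node (psi_at a l) x (psi_at a r)
  end.

(* modified HR-action psi^_i : v is the node labelled pi_i, where w(T) = 0 pi *)
Definition psi_hat (i : nat) (t : tree) : tree := psi_at (nth 0 (word t) i) t.

Inductive orb (n : nat) (T : tree) : tree -> Prop :=
  | orb_refl : orb n T T
  | orb_step : forall T' i, orb n T T' -> (1 <= i <= n)%N -> orb n T (psi_hat i T').

From HB Require Import structures.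
From mathcomp Require Import all_boot all_order all_algebra.
Set Implicit Arguments. Unset Strict Implicit. Unset Printing Implicit Defensive.
Import Order.TTheory GRing.Theory Num.Theory.
Local Open Scope ring_scope.

(* The letter 0 sits at the leftmost node v of the tree.  If v has a right
   subtree R, then sigma_1 is the first letter of w(R), and since 0 is the
   minimum or maximum of the subtree of v, all labels of R have the sign of
   pi_1; otherwise v is a leaf and sigma_1 is the label of its parent.  A map
   psi^_i (with pi_i <> 0) only relabels a node u and its right subtree using
   their own labels: this keeps the labels of R inside R, and it never touches
   the parent of the leaf 0 because psi^ fixes the trees where u is that
   parent.  So the sign of sigma_1 is constant along the orbit. *)

Lemma smin_big s : smin s = \big[Num.min/head 0 s]_(y <- s) y.
Proof. by rewrite unlock. Qed.

Lemma smax_big s : smax s = \big[Num.max/head 0 s]_(y <- s) y.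
Proof. by rewrite unlock. Qed.

Lemma smin_le s y : y \in s -> smin s <= y.
Proof. by move=> ys; rewrite smin_big; exact: ge_bigmin_seq. Qed.

Lemma smax_ge s y : y \in s -> y <= smax s.
Proof. by move=> ys; rewrite smax_big; exact: le_bigmax_seq. Qed.

Lemma smin_mem s : s != [::] -> smin s \in s.
Proof.
case: s => // x s _; rewrite smin_big big_seq.
apply: (big_ind (fun u => u \in x :: s)) => // [|u v]; first exact: mem_head.
by rewrite minElt; case: ifP.
Qed.

Lemma smax_mem s : s != [::] -> smax s \in s.
Proof.
case: s => // x s _; rewrite smax_big big_seq.
apply: (big_ind (fun u => u \in x :: s)) => // [|u v]; first exact: mem_head.
by rewrite maxElt; case: ifP.
Qed.

Lemma word_map_tree f t : word (map_tree f t) = map f (word t).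
Proof. by elim: t => //= l -> x r ->; rewrite map_cat. Qed.

Lemma word_eq0 t : (word t == [::]) = is_empty t.
Proof. by case: t => //= l x r; case: (word l). Qed.

Lemma psi_node_spec l x r : exists x' r', [/\ psi_node l x r = Node l x' r',
  {subset x' :: word r' <= x :: word r} & size (word r') = size (word r)].
Proof.
rewrite /psi_node; case: ifP => _; first by exists x, r; split.
case: ifP => _; first by exists x, r; split.
set R := x :: word r; set v := if _ then _ else _.
have vR : v \in R by rewrite /v; case: ifP => _; [apply: smax_mem | apply: smin_mem].
eexists v, _; split; first reflexivity; last by rewrite word_map_tree size_map.
move=> y; rewrite inE word_map_tree => /predU1P[-> // | /mapP[z zr ->]].
have size_sorted : size (sort <=%R (rem v R)) = size (sort <=%R (word r)).
  by rewrite !size_sort size_rem.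
suff: nth 0 (sort <=%R (rem v R)) (index z (sort <=%R (word r))) \in rem v R.
  exact: mem_rem.
by rewrite -(mem_sort <=%R) mem_nth // size_sorted index_mem mem_sort.
Qed.

Lemma is_empty_psi_at a t : is_empty (psi_at a t) = is_empty t.
Proof.
case: t => //= l x r; case: ifP => // _.
by have [x' [r' [-> _ _]]] := psi_node_spec l x r.
Qed.

Lemma word_psi_at_sub a t : {subset word (psi_at a t) <= word t}.
Proof.
elim: t => //= l IHl x r IHr; case: ifP => _.
  have [x' [r' [-> sub _]]] := psi_node_spec l x r.
  by move=> y /=; rewrite !mem_cat => /orP[-> // | /sub ->]; rewrite orbT.
move=> y /=; rewrite !mem_cat !inE.
by case/or3P => [/IHl -> | -> | /IHr ->]; rewrite ?orbT.
Qed.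

Lemma size_word_psi_at a t : size (word (psi_at a t)) = size (word t).
Proof.
elim: t => //= l IHl x r IHr; case: ifP => _.
  have [x' [r' [-> _ size_r']]] := psi_node_spec l x r.
  by rewrite /= !size_cat /= size_r'.
by rewrite /= !size_cat /= IHl IHr.
Qed.

Lemma word_psi_at_head a t z s : a != z -> word t = z :: s ->
  exists2 s', word (psi_at a t) = z :: s' & {subset s' <= s}.
Proof.
move=> az; elim: t s => //= l IHl x r _ s.
case: (boolP (is_empty l)) => [|l_nonempty].
  case: l {IHl} => //= _ [-> <-]; rewrite eq_sym (negbTE az).
  by exists (word (psi_at a r)) => //; apply: word_psi_at_sub.
case wl: (word l) => [|y u]; first by move: l_nonempty; rewrite -word_eq0 wl.
case=> yz <-; subst y; case: ifP => _.
  have [x' [r' [-> sub _]]] := psi_node_spec l x r.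
  exists (u ++ x' :: word r'); first by rewrite /= wl.
  by move=> w; rewrite !mem_cat => /orP[-> // | /sub ->]; rewrite orbT.
have [u' wl' sub] := IHl u wl.
exists (u' ++ x :: word (psi_at a r)); first by rewrite /= wl'.
move=> w; rewrite !mem_cat !inE.
by case/or3P => [/sub -> | -> | /word_psi_at_sub ->]; rewrite ?orbT.
Qed.

Fixpoint first_node (t : tree) : option (int * tree) :=
  if t is Node l x r then (if l is Leaf then Some (x, r) else first_node l)
  else None.

Fixpoint zero_leaf_parent (t : tree) : option int :=
  if t is Node l x _ then (if is_zero_leaf l then Some x else zero_leaf_parent l)
  else None.

Lemma first_node_word t z r : first_node t = Some (z, r) ->
  exists s, word t = z :: word r ++ s.
Proof.
elim: t => //= l IHl x r0 _; case: l IHl => [_ [-> ->] | l1 y r1 IHl].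
  by exists [::]; rewrite cats0.
by move=> /IHl[s ->]; exists (s ++ x :: word r0); rewrite /= -catA.
Qed.

Lemma first_node_subtree (P : pred tree) t z r :
  all P (subtrees t) -> first_node t = Some (z, r) -> P (Node Leaf z r).
Proof.
elim: t => //= l IHl x r0 _ /andP[Pt]; rewrite all_cat => /andP[Pl _].
by case: l IHl Pt Pl => [_ Pt _ [<- <-] | l1 y r1 IHl _ /IHl].
Qed.

Lemma first_node_nonempty t : ~~ is_empty t -> exists z r, first_node t = Some (z, r).
Proof.
elim: t => //= l IHl x r _ _; case: l IHl => [|l1 y r1 IHl]; first by exists x, r.
exact: IHl.
Qed.

Lemma first_node_psi_at a t z r : a != z -> first_node t = Some (z, r) ->
  exists r', [/\ first_node (psi_at a t) = Some (z, r'),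
                 {subset word r' <= word r} & is_empty r' = is_empty r].
Proof.
move=> az; elim: t => //= l IHl x r0 _; case: l IHl => [_ [-> ->] | l1 y r1 IHl].
  rewrite eq_sym (negbTE az); exists (psi_at a r).
  by split; [| apply: word_psi_at_sub | apply: is_empty_psi_at].
move=> fn; case: ifP => _.
  have [x' [r' [-> _ _]]] := psi_node_spec (Node l1 y r1) x r0.
  by exists r; split; first exact: fn.
have [r' [fn' sub emp]] := IHl fn; exists r'; split => //; move: fn'.
by case: (psi_at a (Node l1 y r1)) (is_empty_psi_at a (Node l1 y r1)).
Qed.

Lemma zero_leaf_parent_word t c :
  zero_leaf_parent t = Some c -> exists s, word t = 0 :: c :: s.
Proof.
elim: t => //= l IHl x r _; case: ifP => [zl [<-] | _ /IHl[s ->]].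
  by case: l zl {IHl} => [|[] z []] //= /eqP->; exists (word r).
by exists (s ++ x :: word r).
Qed.

Lemma zero_leaf_parent_psi_at a t c : a != 0 ->
  zero_leaf_parent t = Some c -> zero_leaf_parent (psi_at a t) = Some c.
Proof.
move=> a0; elim: t => //= l IHl x r _; case: ifP => [zl [<-] | zl].
  case: l zl {IHl} => [|[] z []] //= /eqP->; case: ifP => _; first by rewrite /psi_node.
  by rewrite eq_sym (negbTE a0).
move=> zp; case: ifP => _.
  by have [x' [r' [-> _ _]]] := psi_node_spec l x r; rewrite /= zl.
by have := IHl zp; rewrite /=; case: (psi_at a l) => [|[|? ? ?] ? [|? ? ?]].
Qed.

Lemma zero_leaf_parent_exists t : first_node t = Some (0, Leaf) ->
  ~~ is_zero_leaf t -> exists c, zero_leaf_parent t = Some c.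
Proof.
elim: t => //= l IHl x r _; case: l IHl => [_ [-> ->] | l1 y r1 IHl fn _].
  by rewrite eqxx.
by case: ifP => [_ | /negbT]; [exists x | exact: IHl].
Qed.

(* p is required on all of w(r), not only on its first letter, because psi^
   may permute the labels of r. *)
Definition second_letter_inv (p : pred int) (t : tree) : Prop :=
  (exists r, [/\ first_node t = Some (0, r), ~~ is_empty r & all p (word r)]) \/
  (exists2 c, zero_leaf_parent t = Some c & p c).

Lemma second_letter_invP p t : second_letter_inv p t -> p (nth 0 (word t) 1).
Proof.
case=> [[r [/first_node_word[s ->] r_nonempty pr]] | [c /zero_leaf_parent_word[s ->] //]].
apply: (allP pr); rewrite /= nth_cat; case: r r_nonempty pr => //= l x r _ _.
by case: (word l) => [|y u] /=; rewrite ?mem_head // inE eqxx.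
Qed.

Lemma second_letter_inv_psi_at p a t : a != 0 ->
  second_letter_inv p t -> second_letter_inv p (psi_at a t).
Proof.
move=> a0 [[r [fn r_nonempty pr]] | [c zp pc]]; last first.
  by right; exists c => //; apply: zero_leaf_parent_psi_at.
have [r' [fn' sub emp]] := first_node_psi_at a0 fn.
by left; exists r'; split; rewrite ?emp //; apply/allP => y /sub; apply: (allP pr).
Qed.

Lemma node_ok_zero_root r : node_ok (Node Leaf 0 r) -> 0 \notin word r ->
  all (fun y => Num.sg y == Num.sg (head 0 (word r))) (word r).
Proof.
rewrite /node_ok => /andP[root_extremal _] r_neq0.
have [e sg_r] : exists e, {in word r, forall y, Num.sg y = e}.
  have yt y : y \in word r -> y \in word (Node Leaf 0 r).
    by move=> yr; rewrite /= inE yr orbT.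
  case/orP: root_extremal => /eqP root_ext; [exists 1 | exists (-1)] => y yr;
    have y_neq0 : y != 0 by apply: contraNneq r_neq0 => <-.
  - by apply: gtr0_sg; rewrite lt_neqAle eq_sym y_neq0 root_ext smin_le ?yt.
  - by apply: ltr0_sg; rewrite lt_neqAle y_neq0 root_ext smax_ge ?yt.
apply/allP => y yr; rewrite sg_r //.
by case: (word r) yr sg_r => // z u _ sg_r; rewrite sg_r ?mem_head.
Qed.

Lemma second_letter_inv_sg t s : all node_ok (subtrees t) ->
  word t = 0 :: s -> 0 \notin s -> s != [::] ->
  second_letter_inv (fun y => Num.sg y == Num.sg (head 0 s)) t.
Proof.
move=> ok_t wt s_neq0 s_nonempty.
have [z [r fn]] : exists z r, first_node t = Some (z, r).
  by apply: first_node_nonempty; rewrite -word_eq0 wt.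
have [u] := first_node_word fn; rewrite wt => -[z0 sE]; subst z s.
case: (boolP (is_empty r)) => [r_empty | r_nonempty].
  have r_leaf : r = Leaf by move: r_empty; case: (r).
  subst r.
  right; have [c zp] : exists c, zero_leaf_parent t = Some c.
    apply: zero_leaf_parent_exists; first by rewrite -fn.
    by case: t wt s_nonempty {ok_t fn} => [|[|? ? ?] ? [|? ? ?]] //= [_ <-].
  exists c => //; have [v] := zero_leaf_parent_word zp.
  by rewrite wt => -[->].
left; exists r; split => //.
have head_r : head 0 (word r ++ u) = head 0 (word r).
  by move: r_nonempty; rewrite -word_eq0; case: (word r).
rewrite head_r; apply: node_ok_zero_root; first exact: first_node_subtree ok_t fn.
by apply: contra s_neq0; rewrite mem_cat => ->.
Qed.

Lemma orb_psi_at_invariant (P : tree -> Prop) n T s :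
  (forall a t, a != 0 -> P t -> P (psi_at a t)) ->
  word T = 0 :: s -> 0 \notin s -> size s = n -> P T ->
  forall T', orb n T T' -> P T'.
Proof.
move=> P_psi wT s_neq0 size_s PT T' TT'.
suff [] : P T' /\ exists2 s', word T' = 0 :: s' & (0 \notin s') && (size s' == n) by [].
elim: TT' => [|T2 i _ [PT2 [s2 wT2 /andP[s2_neq0 /eqP size_s2]]] /andP[i_gt0 i_le_n]].
  by split => //; exists s; rewrite // s_neq0 size_s /=.
have a_neq0 : nth 0 (word T2) i != 0.
  rewrite wT2 -(prednK i_gt0) /=; apply: contraNneq s2_neq0 => <-.
  by rewrite mem_nth // size_s2 prednK.
split; first exact: P_psi.
have [s3 wT3 sub] := word_psi_at_head a_neq0 wT2.
exists s3; first exact: wT3.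
apply/andP; split; first exact: contra (@sub 0) s2_neq0.
have := size_word_psi_at (nth 0 (word T2) i) T2.
by rewrite wT3 wT2 => -[->]; rewrite size_s2.
Qed.

Theorem mainTheorem9 (n : nat) (pi : seq int) (T : tree) :
  (1 <= n)%N -> signed_perm n pi -> BHR n T -> word T = 0 :: pi ->
  forall T' : tree, orb n T T' ->
    (0 < nth 0 pi 0 -> 0 < nth 0 (word T') 1) /\
    (nth 0 pi 0 < 0 -> nth 0 (word T') 1 < 0).
Proof.
move=> n_gt0 pi_perm /and3P[/andP[_ ok_T] _ _] wT T' TT'.
have pi_neq0 : 0 \notin pi.
  by apply/negP => /(map_f absz); rewrite (perm_mem pi_perm) mem_iota.
have size_pi : size pi = n by rewrite -(size_iota 1 n) -(perm_size pi_perm) size_map.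
have pi_nonempty : pi != [::] by rewrite -size_eq0 size_pi -lt0n.
have inv_T := second_letter_inv_sg ok_T wT pi_neq0 pi_nonempty.
have /second_letter_invP/eqP sg_T' :=
  orb_psi_at_invariant (@second_letter_inv_psi_at _) wT pi_neq0 size_pi inv_T TT'.
rewrite nth0; split => [pi_gt0 | pi_lt0].
  by rewrite -sgr_gt0 sg_T' sgr_gt0.
by rewrite -sgr_lt0 sg_T' sgr_lt0.
Qed.
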